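(* The map $\iota:S^2_+\to E(S^1)$, $p\mapsto f_p$, where $f_p(x)=d(p,x)$ for $x\in S^1$, is an isometric embedding. Moreover, $\iota(S^2_+)$ is the only subset of $E(S^1)$ that is isometric to $S^2_+$.
   Context: $S^2_+=\{(x,y,z)\in\mathbb{R}^3:x^2+y^2+z^2=1,\ z\ge0\}$ carries its intrinsic (geodesic) metric $d$. $S^1$ is its boundary circle $\{z=0\}$ with the restricted metric, which is the intrinsic metric of the circle of length $2\pi$. $E(S^1)$ is the set of $1$-Lipschitz functions $f:S^1\to\mathbb{R}$ such that $d(x,y)\le f(x)+f(y)$ for all $x,y\in S^1$ and, for each $x$, there is $y$ with $f(x)+f(y)=d(x,y)$. It is equipped with the sup norm $\|\cdot\|_\infty$. *)

From Stdlib Require Import Reals.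
Open Scope R_scope.

Definition pt : Type := (R * R * R)%type.

Definition dot (p q : pt) : R :=
  let '(x1, y1, z1) := p in let '(x2, y2, z2) := q in x1 * x2 + y1 * y2 + z1 * z2.

Definition zc (p : pt) : R := let '(_, _, z) := p in z.

Definition in_S2p (p : pt) : Prop := dot p p = 1 /\ 0 <= zc p.
Definition in_S1 (p : pt) : Prop := dot p p = 1 /\ zc p = 0.

Definition S2p : Type := {p : pt | in_S2p p}.
Definition S1 : Type := {x : pt | in_S1 x}.

(* This is the intrinsic metric of S^2_+ (the closed
   hemisphere is geodesically convex) and restricted to S^1 it is the
   intrinsic metric of the circle of length 2*pi. *)
Definition gdist (p q : pt) : R := acos (dot p q).

Definition dS2p (p q : S2p) : R := gdist (proj1_sig p) (proj1_sig q).
Definition dS1 (x y : S1) : R := gdist (proj1_sig x) (proj1_sig y).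

Definition in_E (f : S1 -> R) : Prop :=
  (forall x y : S1, Rabs (f x - f y) <= dS1 x y) /\
  (forall x y : S1, dS1 x y <= f x + f y) /\
  (forall x : S1, exists y : S1, f x + f y = dS1 x y).

Definition sup_dist (f g : S1 -> R) (r : R) : Prop :=
  is_lub (fun t => exists x : S1, t = Rabs (f x - g x)) r.

Definition iota (p : S2p) : S1 -> R := fun x => gdist (proj1_sig p) (proj1_sig x).

Definition isometric_to_S2p (A : (S1 -> R) -> Prop) : Prop :=
  exists phi : S2p -> (S1 -> R),
    (forall p, A (phi p)) /\
    (forall g, A g -> exists p, phi p = g) /\
    (forall p q, sup_dist (phi p) (phi q) (dS2p p q)).

From Stdlib Require Import Reals Lra Psatz FunctionalExtensionality ProofIrrelevance.
Open Scope R_scope.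

(* By the triangle inequality |d(p,x) - d(q,x)| <= d(p,q), with equality at
   the point x where the great circle from p through q reaches the equator;
   hence iota is isometric, and iota p lies in E(S^1) because d(p,x) +
   d(p,-x) = pi = d(x,-x).

   For uniqueness let phi be an isometry from S^2_+ onto A.  Antipodal
   boundary points are at distance pi, and a function of E(S^1) at sup
   distance pi from another one vanishes somewhere, hence is a distance
   function d_w.  So phi x = d_(w x) for x in S^1, and since
   ||f - d_w|| = f(w) for f in E(S^1), phi p (w x) = d(p,x).  The map
   x |-> w x thus preserves the distances of S^1: it is an orthogonal map of
   the equatorial plane, and extending it by fixing the pole gives an
   isometry T of S^2_+ with phi = iota o T. *)

Lemma Rabs_le_inv x y : Rabs x <= y -> -y <= x <= y.
Proof. unfold Rabs; destruct (Rcase_abs x); intros; lra. Qed.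

Lemma acos_antimono x y : -1 <= x -> x <= y -> y <= 1 -> acos y <= acos x.
Proof.
  intros Hx Hxy Hy.
  destruct (Rle_or_lt (acos y) (acos x)) as [|Hlt]; [assumption|].
  pose proof (acos_bound x); pose proof (acos_bound y).
  pose proof (cos_decreasing_1 (acos x) (acos y) ltac:(lra) ltac:(lra) ltac:(lra) ltac:(lra) Hlt) as Hcos.
  rewrite !cos_acos in Hcos by lra. lra.
Qed.

Lemma acos_inj x y : -1 <= x <= 1 -> -1 <= y <= 1 -> acos x = acos y -> x = y.
Proof. intros Hx Hy E. rewrite <- (cos_acos x Hx), <- (cos_acos y Hy), E. reflexivity. Qed.

Lemma acos_le_of_cos_le t c : 0 <= t <= PI -> -1 <= c <= 1 -> cos t <= c -> acos c <= t.
Proof.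
  intros Ht Hc H. rewrite <- (acos_cos t Ht).
  pose proof (COS_bound t). apply acos_antimono; lra.
Qed.

Lemma acos_cos_le_abs t : acos (cos t) <= Rabs t.
Proof.
  destruct (Rle_or_lt (Rabs t) PI) as [H|H].
  - unfold Rabs in *. destruct (Rcase_abs t).
    + rewrite <- cos_neg, acos_cos; lra.
    + rewrite acos_cos; lra.
  - pose proof (acos_bound (cos t)). lra.
Qed.

Lemma acos_subadditive a b c :
  -1 <= a <= 1 -> -1 <= b <= 1 -> -1 <= c <= 1 ->
  (c - a * b) * (c - a * b) <= (1 - a * a) * (1 - b * b) ->
  acos c <= acos a + acos b.
Proof.
  intros Ha Hb Hc Hgram.
  assert (0 <= 1 - a * a) by nra; assert (0 <= 1 - b * b) by nra.
  pose proof (acos_bound a); pose proof (acos_bound b); pose proof (acos_bound c).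
  destruct (Rle_or_lt (acos a + acos b) PI) as [Hsum|]; [|lra].
  apply acos_le_of_cos_le; [split; lra|exact Hc|].
  rewrite cos_plus, !cos_acos, !sin_acos, <- sqrt_mult_alt by (unfold Rsqr; lra).
  assert (a * b - c <= sqrt ((1 - a²) * (1 - b²))); [|lra].
  apply Rsqr_incr_0_var; [|apply sqrt_pos].
  rewrite Rsqr_sqrt by (unfold Rsqr; apply Rmult_le_pos; lra). unfold Rsqr; nra.
Qed.

(* [a + b x] and [a x + b] are the cosines of the two arcs into which
   [q = a p + b z] cuts the arc from [p] to [z], where [x = p.z]. *)
Lemma acos_split a b x :
  -1 <= x <= 1 -> 0 <= a -> 0 <= b -> a * a + b * b + 2 * a * b * x = 1 ->
  acos x = acos (a + b * x) + acos (a * x + b).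
Proof.
  intros Hx Ha Hb Hunit.
  set (s := sqrt (1 - x * x)).
  assert (Hs : s * s = 1 - x * x) by (apply sqrt_sqrt; nra).
  assert (Hs0 : 0 <= s) by apply sqrt_pos.
  assert (Hsin : forall c y, 0 <= c -> 1 - y² = (c * c) * (1 - x * x) -> sqrt (1 - y²) = c * s).
  { intros c y Hc Hy. rewrite Hy, sqrt_mult_alt, sqrt_square by nra. reflexivity. }
  assert (HA : 1 - (a + b * x)² = (b * b) * (1 - x * x)) by (unfold Rsqr; nra).
  assert (HB : 1 - (a * x + b)² = (a * a) * (1 - x * x)) by (unfold Rsqr; nra).
  assert (-1 <= a + b * x <= 1) by (unfold Rsqr in HA; split; nra).
  assert (-1 <= a * x + b <= 1) by (unfold Rsqr in HB; split; nra).
  pose proof (acos_bound (a + b * x)); pose proof (acos_bound (a * x + b)).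
  assert (acos (a + b * x) <= acos (- (a * x + b))) by (apply acos_antimono; nra).
  rewrite acos_opp in *.
  rewrite <- (acos_cos (acos (a + b * x) + acos (a * x + b))) by lra.
  f_equal. rewrite cos_plus, !cos_acos, !sin_acos, (Hsin b), (Hsin a) by lra.
  replace (b * s * (a * s)) with (a * b * (s * s)) by ring. rewrite Hs.
  transitivity (x * (a * a + b * b + 2 * a * b * x)); [rewrite Hunit|]; ring.
Qed.

Lemma dot_comm p q : dot p q = dot q p.
Proof. destruct p as [[p1 p2] p3], q as [[q1 q2] q3]; simpl; ring. Qed.

Lemma dot_unit_bound p q : dot p p = 1 -> dot q q = 1 -> -1 <= dot p q <= 1.
Proof.
  destruct p as [[p1 p2] p3], q as [[q1 q2] q3]; simpl; intros Hp Hq.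
  pose proof (pow2_ge_0 (p1 + q1)); pose proof (pow2_ge_0 (p2 + q2)); pose proof (pow2_ge_0 (p3 + q3)).
  pose proof (pow2_ge_0 (p1 - q1)); pose proof (pow2_ge_0 (p2 - q2)); pose proof (pow2_ge_0 (p3 - q3)).
  split; nra.
Qed.

Definition det3 (p q r : pt) : R :=
  let '(p1, p2, p3) := p in let '(q1, q2, q3) := q in let '(r1, r2, r3) := r in
  p1 * (q2 * r3 - q3 * r2) - p2 * (q1 * r3 - q3 * r1) + p3 * (q1 * r2 - q2 * r1).

Lemma gram_det_eq_det3_sqr p q r :
  dot p p * dot q q * dot r r + 2 * dot p q * dot q r * dot p r
  - dot p p * (dot q r * dot q r) - dot q q * (dot p r * dot p r)
  - dot r r * (dot p q * dot p q) = det3 p q r ^ 2.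
Proof. destruct p as [[p1 p2] p3], q as [[q1 q2] q3], r as [[r1 r2] r3]; simpl; ring. Qed.

Lemma gram_det_nonneg p q r : dot p p = 1 -> dot q q = 1 -> dot r r = 1 ->
  (dot p r - dot p q * dot q r) * (dot p r - dot p q * dot q r)
  <= (1 - dot p q * dot p q) * (1 - dot q r * dot q r).
Proof.
  intros Hp Hq Hr.
  pose proof (gram_det_eq_det3_sqr p q r) as Gram. rewrite Hp, Hq, Hr in Gram.
  pose proof (pow2_ge_0 (det3 p q r)). nra.
Qed.

Lemma gdist_comm p q : gdist p q = gdist q p.
Proof. unfold gdist; rewrite dot_comm; reflexivity. Qed.

Lemma gdist_self p : dot p p = 1 -> gdist p p = 0.
Proof. intros Hp; unfold gdist; rewrite Hp; apply acos_1. Qed.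

Lemma gdist_bound p q : 0 <= gdist p q <= PI.
Proof. apply acos_bound. Qed.

Lemma gdist_inj p q p' q' : dot p p = 1 -> dot q q = 1 -> dot p' p' = 1 -> dot q' q' = 1 ->
  gdist p q = gdist p' q' -> dot p q = dot p' q'.
Proof. intros; apply acos_inj; auto using dot_unit_bound. Qed.

Lemma gdist_triangle p q r : dot p p = 1 -> dot q q = 1 -> dot r r = 1 ->
  gdist p r <= gdist p q + gdist q r.
Proof.
  intros Hp Hq Hr. apply acos_subadditive; auto using dot_unit_bound, gram_det_nonneg.
Qed.

Lemma gdist_lipschitz p q x : dot p p = 1 -> dot q q = 1 -> dot x x = 1 ->
  Rabs (gdist p x - gdist q x) <= gdist p q.
Proof.
  intros Hp Hq Hx. apply Rabs_le.
  pose proof (gdist_triangle p q x Hp Hq Hx); pose proof (gdist_triangle q p x Hq Hp Hx).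
  rewrite (gdist_comm q p) in *. lra.
Qed.

Definition vopp (p : pt) : pt := let '(p1, p2, p3) := p in (- p1, - p2, - p3).

Lemma gdist_vopp_r p q : gdist p (vopp q) = PI - gdist p q.
Proof.
  unfold gdist. rewrite <- acos_opp. f_equal.
  destruct p as [[p1 p2] p3], q as [[q1 q2] q3]; simpl; ring.
Qed.

Definition vcomb (a : R) (p : pt) (b : R) (q : pt) : pt :=
  let '(p1, p2, p3) := p in let '(q1, q2, q3) := q in
  (a * p1 + b * q1, a * p2 + b * q2, a * p3 + b * q3).

Lemma dot_vcomb_l a p b q r : dot (vcomb a p b q) r = a * dot p r + b * dot q r.
Proof. destruct p as [[p1 p2] p3], q as [[q1 q2] q3], r as [[r1 r2] r3]; simpl; ring. Qed.

Lemma gdist_vcomb_between p z a b : dot p p = 1 -> dot z z = 1 -> 0 <= a -> 0 <= b ->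
  dot (vcomb a p b z) (vcomb a p b z) = 1 ->
  gdist p z = gdist p (vcomb a p b z) + gdist (vcomb a p b z) z.
Proof.
  intros Hp Hz Ha Hb Hq. unfold gdist.
  rewrite dot_vcomb_l, (dot_comm p), (dot_comm z), !dot_vcomb_l, Hp, Hz, (dot_comm z p) in Hq.
  rewrite (dot_comm p (vcomb _ _ _ _)), !dot_vcomb_l, Hp, Hz, (dot_comm z p), !Rmult_1_r.
  apply acos_split; auto using dot_unit_bound. lra.
Qed.

Lemma equator_point_beyond p q : in_S2p p -> in_S2p q -> 0 < zc p ->
  exists a b z, in_S1 z /\ 0 <= a /\ 0 <= b /\ q = vcomb a p b z.
Proof.
  destruct p as [[p1 p2] p3], q as [[q1 q2] q3]; unfold in_S2p, in_S1; simpl.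
  intros [Hp _] [Hq Hq3] Hp3.
  (* [p3 q - q3 p] is horizontal, so [q] is a nonnegative combination of [p]
     and the direction of this vector. *)
  set (w1 := p3 * q1 - q3 * p1); set (w2 := p3 * q2 - q3 * p2).
  assert (Ha : 0 <= q3 / p3) by (apply Rle_mult_inv_pos; lra).
  destruct (Req_dec (w1 * w1 + w2 * w2) 0) as [Hw0|Hw].
  - assert (w1 = 0 /\ w2 = 0) as [H1 H2] by (split; nra).
    exists (q3 / p3), 0, (1, 0, 0). repeat split; simpl; try lra.
    unfold w1, w2 in *. f_equal; [f_equal|]; field_simplify; try lra.
    all: apply (Rmult_eq_reg_l p3); [field_simplify; lra|lra].
  - set (s := sqrt (w1 * w1 + w2 * w2)).
    assert (Hs : 0 < s) by (apply sqrt_lt_R0; nra).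
    assert (Hss : s * s = w1 * w1 + w2 * w2) by (apply sqrt_sqrt; nra).
    exists (q3 / p3), (s / p3), (w1 / s, w2 / s, 0). repeat split; simpl.
    + replace (w1 / s * (w1 / s) + w2 / s * (w2 / s) + 0 * 0) with ((w1 * w1 + w2 * w2) / (s * s)) by (field; lra).
      rewrite Hss; field; exact Hw.
    + exact Ha.
    + apply Rle_mult_inv_pos; lra.
    + unfold w1, w2. f_equal; [f_equal|]; field; lra.
Qed.

Lemma gdist_gap_attained p q : in_S2p p -> in_S2p q ->
  exists z, in_S1 z /\ Rabs (gdist p z - gdist q z) = gdist p q.
Proof.
  intros Hp Hq. destruct (Rle_lt_or_eq_dec 0 (zc p) (proj2 Hp)) as [Hp3|Hp3].
  - destruct (equator_point_beyond p q Hp Hq Hp3) as (a & b & z & Hz & Ha & Hb & ->).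
    exists z. split; [exact Hz|].
    rewrite (gdist_vcomb_between p z a b (proj1 Hp) (proj1 Hz) Ha Hb (proj1 Hq)).
    rewrite Rplus_minus_r. apply Rabs_right, Rle_ge, gdist_bound.
  - exists p. split; [split; [apply Hp|auto]|].
    rewrite gdist_self, (gdist_comm q) by apply Hp.
    rewrite Rminus_0_l, Rabs_Ropp. apply Rabs_right, Rle_ge, gdist_bound.
Qed.

Lemma S1_unit (x : S1) : dot (proj1_sig x) (proj1_sig x) = 1.
Proof. exact (proj1 (proj2_sig x)). Qed.

Lemma S2p_unit (p : S2p) : dot (proj1_sig p) (proj1_sig p) = 1.
Proof. exact (proj1 (proj2_sig p)). Qed.

Lemma sig_ext {A : Type} {P : A -> Prop} (x y : {a | P a}) : proj1_sig x = proj1_sig y -> x = y.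
Proof. apply eq_sig_hprop. intros; apply proof_irrelevance. Qed.

Lemma in_S1_vopp x : in_S1 x -> in_S1 (vopp x).
Proof. destruct x as [[x1 x2] x3]; unfold in_S1; simpl; intros [H1 H2]; split; lra. Qed.

Definition S1_opp (x : S1) : S1 := exist _ (vopp (proj1_sig x)) (in_S1_vopp _ (proj2_sig x)).

Lemma dS1_self (x : S1) : dS1 x x = 0.
Proof. apply gdist_self, S1_unit. Qed.

Lemma dS1_comm (x y : S1) : dS1 x y = dS1 y x.
Proof. apply gdist_comm. Qed.

Lemma sup_dist_of_attained (f g : S1 -> R) r z :
  (forall x, Rabs (f x - g x) <= r) -> Rabs (f z - g z) = r -> sup_dist f g r.
Proof.
  intros Hub Hz. split.
  - intros t [x ->]. apply Hub.
  - intros M HM. apply HM. exists z. symmetry; exact Hz.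
Qed.

Lemma iota_in_E (p : S2p) : in_E (iota p).
Proof.
  unfold in_E, iota. split; [|split].
  - intros x y. rewrite !(gdist_comm (proj1_sig p)). apply gdist_lipschitz; auto using S1_unit, S2p_unit.
  - intros x y. rewrite (gdist_comm (proj1_sig p)). apply gdist_triangle; auto using S1_unit, S2p_unit.
  - intros x. exists (S1_opp x). unfold dS1; simpl.
    rewrite !gdist_vopp_r, gdist_self by apply S1_unit. ring.
Qed.

Lemma iota_isometric (p q : S2p) : sup_dist (iota p) (iota q) (dS2p p q).
Proof.
  destruct p as [p Hp], q as [q Hq]. unfold iota, dS2p; simpl.
  destruct (gdist_gap_attained p q Hp Hq) as [z [Hz Hgap]].
  apply (sup_dist_of_attained _ _ _ (exist _ z Hz)); [|exact Hgap].
  intros x. apply gdist_lipschitz; [apply Hp|apply Hq|apply S1_unit].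
Qed.

Lemma lipschitz_continuity_pt (h : R -> R) k x : 0 <= k ->
  (forall y, Rabs (h y - h x) <= k * Rabs (y - x)) -> continuity_pt h x.
Proof.
  intros Hk Hlip eps Heps. exists (eps / (k + 1)). split.
  - apply Rdiv_lt_0_compat; lra.
  - intros y [_ Hy]. simpl in *. unfold R_dist in *.
    apply Rle_lt_trans with (k * Rabs (y - x)); [apply Hlip|].
    apply Rle_lt_trans with (k * (eps / (k + 1))); [apply Rmult_le_compat_l; lra|].
    apply Rmult_lt_reg_r with (k + 1); [lra|]. field_simplify; nra.
Qed.

Lemma in_S1_circle t : in_S1 (cos t, sin t, 0).
Proof. unfold in_S1; simpl. pose proof (sin2_cos2 t). unfold Rsqr in *. split; lra. Qed.

Definition circle_pt (t : R) : S1 := exist _ (cos t, sin t, 0) (in_S1_circle t).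

Lemma dS1_circle_pt t t' : dS1 (circle_pt t) (circle_pt t') <= Rabs (t - t').
Proof.
  unfold dS1, gdist; simpl.
  replace (cos t * cos t' + sin t * sin t' + 0 * 0) with (cos (t - t')) by (rewrite cos_minus; ring).
  apply acos_cos_le_abs.
Qed.

Lemma circle_pt_surj (z : S1) : exists t, 0 <= t <= 2 * PI /\ circle_pt t = z.
Proof.
  destruct z as [[[a b] c] [Hz Hc]]. simpl in Hz, Hc. subst c.
  assert (Ha : -1 <= a <= 1) by (split; nra).
  assert (Hsin : sqrt (1 - a²) = Rabs b).
  { rewrite <- sqrt_Rsqr_abs. f_equal. unfold Rsqr. lra. }
  pose proof (acos_bound a). pose proof PI_RGT_0.
  destruct (Rle_or_lt 0 b) as [Hb|Hb].
  - exists (acos a). split; [lra|]. apply sig_ext; simpl.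
    rewrite cos_acos, sin_acos, Hsin, Rabs_right by lra. reflexivity.
  - exists (2 * PI - acos a). split; [lra|]. apply sig_ext; simpl.
    rewrite cos_minus, sin_minus, cos_2PI, sin_2PI, cos_acos, sin_acos, Hsin, Rabs_left by lra.
    f_equal; f_equal; ring.
Qed.

Lemma sup_dist_attained (f g : S1 -> R) r :
  (forall x y, Rabs (f x - f y) <= dS1 x y) ->
  (forall x y, Rabs (g x - g y) <= dS1 x y) ->
  sup_dist f g r -> exists z, Rabs (f z - g z) = r.
Proof.
  intros Hf Hg [Hub Hlub].
  set (h t := Rabs (f (circle_pt t) - g (circle_pt t))).
  assert (Hlip : forall t s, Rabs (h s - h t) <= 2 * Rabs (s - t)).
  { intros t s. unfold h. pose proof (dS1_circle_pt s t).
    set (x := circle_pt s) in *; set (y := circle_pt t) in *.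
    eapply Rle_trans; [apply Rabs_triang_inv2|].
    replace (f x - g x - (f y - g y)) with ((f x - f y) + - (g x - g y)) by ring.
    eapply Rle_trans; [apply Rabs_triang|]. rewrite Rabs_Ropp.
    pose proof (Hf x y); pose proof (Hg x y). lra. }
  destruct (continuity_ab_maj h 0 (2 * PI)) as [M [HM _]].
  - pose proof PI_RGT_0. lra.
  - intros t _. apply (lipschitz_continuity_pt h 2); [lra|apply Hlip].
  - exists (circle_pt M). apply Rle_antisym.
    + apply Hub. exists (circle_pt M). reflexivity.
    + apply Hlub. intros t [x ->]. destruct (circle_pt_surj x) as [s [Hs <-]]. apply (HM s Hs).
Qed.

Lemma in_E_nonneg f x : in_E f -> 0 <= f x.
Proof. intros [_ [Htri _]]. pose proof (Htri x x). rewrite dS1_self in *. lra. Qed.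

Lemma in_E_le_PI f x : in_E f -> f x <= PI.
Proof.
  intros Hf. destruct (proj2 (proj2 Hf) x) as [y Hy].
  pose proof (in_E_nonneg f y Hf); pose proof (gdist_bound (proj1_sig x) (proj1_sig y)).
  unfold dS1 in Hy. lra.
Qed.

Lemma in_E_zero f z : in_E f -> f z = 0 -> f = dS1 z.
Proof.
  intros [Hlip [Htri _]] Hz. apply functional_extensionality. intros y.
  pose proof (Rabs_le_inv _ _ (Hlip y z)); pose proof (Htri z y).
  rewrite (dS1_comm y z) in *. lra.
Qed.

Lemma in_E_sup_dist_dS1 f w : in_E f -> sup_dist f (dS1 w) (f w).
Proof.
  intros Hf. apply (sup_dist_of_attained _ _ _ w).
  - destruct Hf as [Hlip [Htri _]]. intros x.
    pose proof (Rabs_le_inv _ _ (Hlip x w)); pose proof (Htri w x).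
    rewrite (dS1_comm x w) in *. apply Rabs_le. lra.
  - rewrite dS1_self, Rminus_0_r. apply Rabs_right, Rle_ge, (in_E_nonneg f w Hf).
Qed.

(* Values of [f] lie in [[0, PI]], so a gap of [PI] forces [f z] to be [0]
   or [PI]; in the latter case the partner of [z] is a zero of [f]. *)
Lemma in_E_far_is_dS1 f g : in_E f -> in_E g -> sup_dist f g PI -> exists w, f = dS1 w.
Proof.
  intros Hf Hg Hs.
  destruct (sup_dist_attained f g PI (proj1 Hf) (proj1 Hg) Hs) as [z Hz].
  pose proof (in_E_nonneg f z Hf); pose proof (in_E_nonneg g z Hg); pose proof (in_E_le_PI g z Hg).
  destruct (proj2 (proj2 Hf) z) as [y Hy].
  pose proof (in_E_nonneg f y Hf); pose proof (gdist_bound (proj1_sig z) (proj1_sig y)).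
  unfold dS1 in Hy.
  destruct (Rle_lt_dec (f z - g z) 0) as [Hneg|Hpos].
  - exists z. apply in_E_zero; [exact Hf|].
    rewrite Rabs_left1 in Hz by exact Hneg. lra.
  - exists y. apply in_E_zero; [exact Hf|].
    rewrite Rabs_right in Hz by lra. lra.
Qed.

Lemma orthonormal2_rows u1 u2 v1 v2 :
  u1 * u1 + u2 * u2 = 1 -> v1 * v1 + v2 * v2 = 1 -> u1 * v1 + u2 * v2 = 0 ->
  u1 * u1 + v1 * v1 = 1 /\ u2 * u2 + v2 * v2 = 1 /\ u1 * u2 + v1 * v2 = 0.
Proof.
  intros Hu Hv Huv.
  (* [v] is the quarter turn of [u] times a sign [s]. *)
  set (s := u2 * v1 - u1 * v2).
  assert (Hs : s * s = 1).
  { transitivity ((u1 * u1 + u2 * u2) * (v1 * v1 + v2 * v2) - (u1 * v1 + u2 * v2) ^ 2);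
      [unfold s; ring|rewrite Hu, Hv, Huv; ring]. }
  assert (Hv1 : v1 = s * u2).
  { transitivity (v1 * (u1 * u1 + u2 * u2) - u1 * (u1 * v1 + u2 * v2));
      [rewrite Hu, Huv; ring|unfold s; ring]. }
  assert (Hv2 : v2 = - s * u1).
  { transitivity (v2 * (u1 * u1 + u2 * u2) - u2 * (u1 * v1 + u2 * v2));
      [rewrite Hu, Huv; ring|unfold s; ring]. }
  rewrite Hv1, Hv2. repeat split.
  - transitivity (u1 * u1 + s * s * (u2 * u2)); [ring|rewrite Hs; lra].
  - transitivity (u2 * u2 + s * s * (u1 * u1)); [ring|rewrite Hs; lra].
  - transitivity (u1 * u2 * (1 - s * s)); [ring|rewrite Hs; ring].
Qed.

Definition equator_frame (u v : pt) : Prop := in_S1 u /\ in_S1 v /\ dot u v = 0.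

(* [frame_point u v] is the isometry of R^3 fixing the pole and sending the
   first two basis vectors to [u] and [v]; [frame_coords u v] is its inverse. *)
Definition frame_point (u v c : pt) : pt :=
  let '(u1, u2, _) := u in let '(v1, v2, _) := v in let '(c1, c2, c3) := c in
  (c1 * u1 + c2 * v1, c1 * u2 + c2 * v2, c3).

Definition frame_coords (u v y : pt) : pt := (dot u y, dot v y, zc y).

Lemma dot_frame_point u v c c' : equator_frame u v ->
  dot (frame_point u v c) (frame_point u v c') = dot c c'.
Proof.
  destruct u as [[u1 u2] u3], v as [[v1 v2] v3], c as [[c1 c2] c3], c' as [[d1 d2] d3].
  unfold equator_frame, in_S1; simpl. intros [[Hu Hu3] [[Hv Hv3] Huv]]. subst u3 v3.
  transitivity (c1 * d1 * (u1 * u1 + u2 * u2 + 0 * 0) + (c1 * d2 + c2 * d1) * (u1 * v1 + u2 * v2 + 0 * 0)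
                + c2 * d2 * (v1 * v1 + v2 * v2 + 0 * 0) + c3 * d3); [ring|].
  rewrite Hu, Hv, Huv. ring.
Qed.

Lemma frame_point_coords u v y : equator_frame u v -> frame_point u v (frame_coords u v y) = y.
Proof.
  destruct u as [[u1 u2] u3], v as [[v1 v2] v3], y as [[y1 y2] y3].
  unfold equator_frame, in_S1; simpl. intros [[Hu Hu3] [[Hv Hv3] Huv]]. subst u3 v3.
  destruct (orthonormal2_rows u1 u2 v1 v2) as (R1 & R2 & R12); [lra|lra|lra|].
  do 2 f_equal.
  - transitivity (y1 * (u1 * u1 + v1 * v1) + y2 * (u1 * u2 + v1 * v2)); [ring|rewrite R1, R12; ring].
  - transitivity (y2 * (u2 * u2 + v2 * v2) + y1 * (u1 * u2 + v1 * v2)); [ring|rewrite R2, R12; ring].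
Qed.

Lemma dot_frame_coords_l u v y c : equator_frame u v ->
  dot (frame_coords u v y) c = dot y (frame_point u v c).
Proof.
  destruct u as [[u1 u2] u3], v as [[v1 v2] v3], y as [[y1 y2] y3], c as [[c1 c2] c3].
  unfold equator_frame, in_S1; simpl. intros [[_ Hu3] [[_ Hv3] _]]. subst u3 v3. ring.
Qed.

Lemma dot_frame_coords u v y : equator_frame u v ->
  dot (frame_coords u v y) (frame_coords u v y) = dot y y.
Proof.
  intros Hf. rewrite dot_frame_coords_l, frame_point_coords by exact Hf. reflexivity.
Qed.

Lemma in_S2p_frame_point u v c : equator_frame u v -> in_S2p c -> in_S2p (frame_point u v c).
Proof.
  intros Hf [Hc Hc3]. split; [rewrite dot_frame_point; assumption|].
  destruct u as [[u1 u2] u3], v as [[v1 v2] v3], c as [[c1 c2] c3]. exact Hc3.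
Qed.

Lemma in_S2p_frame_coords u v y : equator_frame u v -> in_S2p y -> in_S2p (frame_coords u v y).
Proof. intros Hf [Hy Hy3]. split; [rewrite dot_frame_coords|]; assumption. Qed.

Lemma in_S1_frame_coords u v y : equator_frame u v -> in_S1 y -> in_S1 (frame_coords u v y).
Proof. intros Hf [Hy Hy3]. split; [rewrite dot_frame_coords|]; assumption. Qed.

Lemma in_S2p_of_in_S1 x : in_S1 x -> in_S2p x.
Proof. intros [Hx Hx3]. split; lra. Qed.

Definition S1_to_S2p (x : S1) : S2p := exist _ (proj1_sig x) (in_S2p_of_in_S1 _ (proj2_sig x)).

Lemma in_S1_e1 : in_S1 (1, 0, 0). Proof. split; simpl; ring. Qed.
Lemma in_S1_e2 : in_S1 (0, 1, 0). Proof. split; simpl; ring. Qed.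
Definition e1 : S1 := exist _ (1, 0, 0) in_S1_e1.
Definition e2 : S1 := exist _ (0, 1, 0) in_S1_e2.

Section Rigidity.

Variable phi : S2p -> S1 -> R.
Hypothesis phi_in_E : forall p, in_E (phi p).
Hypothesis phi_isometric : forall p q, sup_dist (phi p) (phi q) (dS2p p q).

Lemma phi_boundary_dS1 (x : S1) : exists w, phi (S1_to_S2p x) = dS1 w.
Proof.
  apply (in_E_far_is_dS1 _ (phi (S1_to_S2p (S1_opp x)))); [apply phi_in_E|apply phi_in_E|].
  replace PI with (dS2p (S1_to_S2p x) (S1_to_S2p (S1_opp x))); [apply phi_isometric|].
  unfold dS2p; simpl. rewrite gdist_vopp_r, gdist_self by apply S1_unit. ring.
Qed.

Lemma phi_at_center (x w : S1) (p : S2p) :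
  phi (S1_to_S2p x) = dS1 w -> phi p w = gdist (proj1_sig p) (proj1_sig x).
Proof.
  intros Hx. apply (is_lub_u _ _ _ (in_E_sup_dist_dS1 (phi p) w (phi_in_E p))).
  rewrite <- Hx. apply phi_isometric.
Qed.

Variables u v : S1.
Hypothesis phi_e1 : phi (S1_to_S2p e1) = dS1 u.
Hypothesis phi_e2 : phi (S1_to_S2p e2) = dS1 v.

Lemma phi_center_coords (x w : S1) : phi (S1_to_S2p x) = dS1 w ->
  dot (proj1_sig u) (proj1_sig w) = dot (proj1_sig e1) (proj1_sig x) /\
  dot (proj1_sig v) (proj1_sig w) = dot (proj1_sig e2) (proj1_sig x).
Proof.
  intros Hx.
  pose proof (phi_at_center x w (S1_to_S2p e1) Hx) as H1; rewrite phi_e1 in H1.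
  pose proof (phi_at_center x w (S1_to_S2p e2) Hx) as H2; rewrite phi_e2 in H2.
  split; apply gdist_inj; auto using S1_unit, S2p_unit.
Qed.

Lemma equator_frame_u_v : equator_frame (proj1_sig u) (proj1_sig v).
Proof.
  split; [exact (proj2_sig u)|split; [exact (proj2_sig v)|]].
  destruct (phi_center_coords e2 v phi_e2) as [Huv _]. rewrite Huv. simpl. ring.
Qed.

Definition coords_S1 (y : S1) : S1 :=
  exist _ (frame_coords (proj1_sig u) (proj1_sig v) (proj1_sig y))
    (in_S1_frame_coords _ _ _ equator_frame_u_v (proj2_sig y)).

Lemma phi_coords_S1 (y : S1) : phi (S1_to_S2p (coords_S1 y)) = dS1 y.
Proof.
  destruct (phi_boundary_dS1 (coords_S1 y)) as [w Hw]. rewrite Hw. f_equal.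
  destruct (phi_center_coords _ _ Hw) as [Hu Hv]. simpl in Hu, Hv.
  apply sig_ext.
  rewrite <- (frame_point_coords (proj1_sig u) (proj1_sig v) (proj1_sig w)) by exact equator_frame_u_v.
  rewrite <- (frame_point_coords (proj1_sig u) (proj1_sig v) (proj1_sig y)) by exact equator_frame_u_v.
  unfold frame_coords. rewrite Hu, Hv, (proj2 (proj2_sig w)), (proj2 (proj2_sig y)). do 3 f_equal; ring.
Qed.

Lemma phi_eq_iota_frame (p : S2p) :
  phi p = iota (exist _ (frame_point (proj1_sig u) (proj1_sig v) (proj1_sig p))
                  (in_S2p_frame_point _ _ _ equator_frame_u_v (proj2_sig p))).
Proof.
  apply functional_extensionality. intros y.
  rewrite (phi_at_center (coords_S1 y) y p (phi_coords_S1 y)).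
  unfold iota, gdist; simpl. f_equal.
  rewrite dot_comm, dot_frame_coords_l by exact equator_frame_u_v. apply dot_comm.
Qed.

Lemma phi_range_eq_iota_range (g : S1 -> R) :
  (exists p, g = phi p) <-> (exists q, g = iota q).
Proof.
  split; intros [q ->].
  - eexists. apply phi_eq_iota_frame.
  - exists (exist _ _ (in_S2p_frame_coords _ _ _ equator_frame_u_v (proj2_sig q))).
    rewrite phi_eq_iota_frame. f_equal. apply sig_ext. simpl.
    symmetry. apply frame_point_coords, equator_frame_u_v.
Qed.

End Rigidity.

Theorem lemma2p9 :
  (* iota is an isometric embedding of S^2_+ into E(S^1) *)
  (forall p : S2p, in_E (iota p)) /\
  (forall p q : S2p, sup_dist (iota p) (iota q) (dS2p p q)) /\
  (* iota(S^2_+) is the only subset of E(S^1) isometric to S^2_+ *)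
  (forall A : (S1 -> R) -> Prop,
     (forall g, A g -> in_E g) ->
     isometric_to_S2p A ->
     forall g, A g <-> exists p : S2p, g = iota p).
Proof.
  split; [exact iota_in_E|split; [exact iota_isometric|]].
  intros A HA [phi [Hin [Honto Hiso]]] g.
  assert (HE : forall p, in_E (phi p)) by auto.
  destruct (phi_boundary_dS1 phi HE Hiso e1) as [u Hu].
  destruct (phi_boundary_dS1 phi HE Hiso e2) as [v Hv].
  rewrite <- (phi_range_eq_iota_range phi HE Hiso u v Hu Hv g).
  split.
  - intros Hg. destruct (Honto g Hg) as [p <-]. exists p. reflexivity.
  - intros [p ->]. apply Hin.
Qed.
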